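(* The labelled rule $\Box_S$, with premise $\Gamma, A \leq \mathbf{m} \vdash \mathbf{j} \leq \Box \mathbf{m}, \Delta$ and conclusion $\Gamma \vdash \mathbf{j} \leq \Box A, \Delta$ (where $\mathbf{m}$ does not occur in the conclusion), is sound and invertible on the canonical extension $\mathbb{A}^\delta$ of any $\mathcal{L}$-algebra $\mathbb{A}$; i.e. validity of the premise is equivalent to validity of the conclusion, via the chain: uncurrying (using the side condition), the adjunction $\Diamond^{b}\mathbf{j}\leq\mathbf{m}$ iff $\mathbf{j}\leq\Box\mathbf{m}$, complete meet-generation giving $\Diamond^{b}\mathbf{j}\leq A$, and adjunction again giving $\mathbf{j}\leq\Box A$.
   Context: An $\mathcal{L}$-algebra is a bounded lattice with a finitely join-preserving $\Diamond$ and finitely meet-preserving $\Box$; its canonical extension $\mathbb{A}^\delta=(L^\delta,\Box^\pi,\Diamond^\sigma)$ is complete, with $\Box^\pi$ completely meet-preserving and hence having a left adjoint denoted $\Diamond^{b}$ ($\Diamond^{b}u\leq v$ iff $u\leq\Box v$). Nominals range over a completely join-generating subset and conominals over a completely meet-generating subset of $\mathbb{A}^\delta$. A sequent $\Gamma\vdash\Delta$ of inequalities (labelled formulas $\mathbf{j}\leq A$, $A\leq\mathbf{m}$ and pure structures $\mathbf{j}\leq\mathbf{T}$, $\mathbf{T}\leq\mathbf{m}$) is interpreted as $\forall\overline{p}\forall\overline{\mathbf{j}}\forall\overline{\mathbf{m}}(\bigwedge\Gamma\Rightarrow\bigvee\Delta)$. *)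

From mathcomp Require Import all_boot all_order.
Set Implicit Arguments. Unset Strict Implicit. Unset Printing Implicit Defensive.
Import Order.Theory.
Local Open Scope order_scope.

Definition is_Lalgebra d (L : tbLatticeType d) (box dia : L -> L) : Prop :=
  [/\ box \top = \top, (forall a b, box (a `&` b) = box a `&` box b),
      dia \bot = \bot & (forall a b, dia (a `|` b) = dia a `|` dia b)].

Section LubGlb.
Context {d : Order.disp_t} {C : porderType d}.
Definition is_lub (S : C -> Prop) (x : C) : Prop :=
  (forall y, S y -> y <= x) /\ (forall z, (forall y, S y -> y <= z) -> x <= z).
Definition is_glb (S : C -> Prop) (x : C) : Prop :=
  (forall y, S y -> x <= y) /\ (forall z, (forall y, S y -> z <= y) -> z <= x).
Definition complete_lattice : Prop :=
  forall S : C -> Prop, exists x, is_lub S x.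
Definition completely_join_generating (J : C -> Prop) : Prop :=
  forall u : C, is_lub (fun j => J j /\ j <= u) u.
Definition completely_meet_generating (M : C -> Prop) : Prop :=
  forall u : C, is_glb (fun m => M m /\ u <= m) u.
End LubGlb.

Section CanExt.
Context {d : Order.disp_t} {L : tbLatticeType d}
        {dC : Order.disp_t} {C : tbLatticeType dC} (e : L -> C).

Definition is_closed (k : C) : Prop :=
  exists F : L -> Prop, is_glb (fun x => exists a, F a /\ x = e a) k.
Definition is_open (o : C) : Prop :=
  exists I : L -> Prop, is_lub (fun x => exists a, I a /\ x = e a) o.

Definition canonical_extension : Prop :=
  [/\ complete_lattice (C := C),
      [/\ (forall a b, (e a <= e b) = (a <= b)),
          (forall a b, e (a `&` b) = e a `&` e b),
          (forall a b, e (a `|` b) = e a `|` e b),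
          e \top = \top & e \bot = \bot],
      (forall u, is_lub (fun k => is_closed k /\ k <= u) u /\
                 is_glb (fun o => is_open o /\ u <= o) u) &
      (forall (S T : L -> Prop) (k o : C),
          is_glb (fun x => exists a, S a /\ x = e a) k ->
          is_lub (fun x => exists a, T a /\ x = e a) o ->
          k <= o ->
          exists (s t : seq L), (forall a, a \in s -> S a) /\
                                (forall a, a \in t -> T a) /\
                                \meet_(a <- s) a <= \join_(b <- t) b)].

(* g = f^pi : for open o, f^pi(o) = \/{ e(f a) | e a <= o };
   for arbitrary u, f^pi(u) = /\{ f^pi(o) | o open, u <= o }. *)
Definition pi_extension (f : L -> L) (g : C -> C) : Prop :=
  forall u, is_glb (fun x => exists o, [/\ is_open o, u <= o &
                     is_lub (fun y => exists a, e a <= o /\ y = e (f a)) x]) (g u).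

(* g = f^sigma : for closed k, f^sigma(k) = /\{ e(f a) | k <= e a };
   for arbitrary u, f^sigma(u) = \/{ f^sigma(k) | k closed, k <= u }. *)
Definition sigma_extension (f : L -> L) (g : C -> C) : Prop :=
  forall u, is_lub (fun x => exists k, [/\ is_closed k, k <= u &
                     is_glb (fun y => exists a, k <= e a /\ y = e (f a)) x]) (g u).
End CanExt.

Inductive fml : Type :=
  | FVar of nat | FTop | FBot
  | FAnd of fml & fml | FOr of fml & fml
  | FBox of fml | FDia of fml.

Inductive pstr : Type :=
  | PNom of nat
  | PCnom of nat
  | PBox of pstr
  | PDia of pstr
  | PBDia of pstr.       (* black diamond: left adjoint of box *)

Inductive ineq : Type :=
  | NomLeF of nat & fml
  | FLeCnom of fml & nat
  | NomLeP of nat & pstr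
  | PLeCnom of pstr & nat.

(* list membership (Prop-valued, no decidable equality needed) *)
Fixpoint In_seq {T : Type} (x : T) (s : seq T) : Prop :=
  match s with [::] => False | y :: s' => y = x \/ In_seq x s' end.

Record sequent := Sequent { antecedent : seq ineq; succedent : seq ineq }.

Fixpoint cnom_in_pstr (m : nat) (T : pstr) : bool :=
  match T with
  | PNom _ => false
  | PCnom m' => m' == m
  | PBox T' | PDia T' | PBDia T' => cnom_in_pstr m T'
  end.

Definition cnom_in_ineq (m : nat) (i : ineq) : bool :=
  match i with
  | NomLeF _ _ => false
  | FLeCnom _ m' => m' == m
  | NomLeP _ T => cnom_in_pstr m T
  | PLeCnom T m' => cnom_in_pstr m T || (m' == m)
  end.

Definition cnom_in_sequent (m : nat) (s : sequent) : bool :=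
  has (cnom_in_ineq m) (antecedent s) || has (cnom_in_ineq m) (succedent s).

Section Semantics.
Context {dC : Order.disp_t} {C : tbLatticeType dC}
        (boxC diaC bdiaC : C -> C).

Fixpoint fml_val (V : nat -> C) (A : fml) : C :=
  match A with
  | FVar p => V p
  | FTop => \top
  | FBot => \bot
  | FAnd A B => fml_val V A `&` fml_val V B
  | FOr A B => fml_val V A `|` fml_val V B
  | FBox A => boxC (fml_val V A)
  | FDia A => diaC (fml_val V A)
  end.

Fixpoint pstr_val (nj nm : nat -> C) (T : pstr) : C :=
  match T with
  | PNom j => nj j
  | PCnom m => nm m
  | PBox T => boxC (pstr_val nj nm T)
  | PDia T => diaC (pstr_val nj nm T)
  | PBDia T => bdiaC (pstr_val nj nm T)
  end.

Definition ineq_holds (V nj nm : nat -> C) (i : ineq) : Prop :=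
  match i with
  | NomLeF j A => nj j <= fml_val V A
  | FLeCnom A m => fml_val V A <= nm m
  | NomLeP j T => nj j <= pstr_val nj nm T
  | PLeCnom T m => pstr_val nj nm T <= nm m
  end.

Definition seq_valid (J M : C -> Prop) (s : sequent) : Prop :=
  forall (V nj nm : nat -> C),
    (forall i, J (nj i)) -> (forall i, M (nm i)) ->
    (forall g, In_seq g (antecedent s) -> ineq_holds V nj nm g) ->
    exists2 dl, In_seq dl (succedent s) & ineq_holds V nj nm dl.
End Semantics.

From mathcomp Require Import all_boot all_order.
From Stdlib Require Import Classical.
Import Order.Theory.
Local Open Scope order_scope.

(* Since m is fresh, the premise says: whenever Gamma holds and Delta fails,
   j <= box m for every conominal m above A.  If box has a left adjoint and the
   conominals are completely meet-generating, this is exactly j <= box A: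
   the left adjoint of box sends j below every conominal above A, hence below A. *)

Lemma In_seq_cat {T : Type} (s t : seq T) x :
  In_seq x (s ++ t) <-> In_seq x s \/ In_seq x t.
Proof. by elim: s => [|y s IH] /=; [|rewrite IH]; tauto. Qed.

Lemma In_seq_hasN {T : Type} {p : pred T} {s : seq T} {x : T} :
  ~~ has p s -> In_seq x s -> ~~ p x.
Proof. by elim: s => [|y s IH] //= /norP[py ps] [<-|/IH]; last exact. Qed.

Lemma exists_In_seq_cons {T : Type} (P : T -> Prop) y (s : seq T) :
  (exists2 x, In_seq x (y :: s) & P x) <-> P y \/ exists2 x, In_seq x s & P x.
Proof.
split=> [[x [<-|xs] Px]|[Py|[x xs Px]]]; [by left|by right; exists x|..].
- by exists y; first left.
- by exists x; first right.
Qed.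

Lemma le_right_adjoint_meet_generated {d} {C : porderType d} {f g : C -> C}
    {M : C -> Prop} :
  (forall u v, f u <= v <-> u <= g v) -> completely_meet_generating M ->
  forall u v, u <= g v <-> (forall m, M m -> v <= m -> u <= g m).
Proof.
move=> fg HM u v; split=> [/fg fuv m _ vm | ugm]; first by apply/fg/(le_trans fuv).
by apply/fg; apply: (HM v).2 => m [Mm vm]; apply/fg/ugm.
Qed.

Definition set_cnom {T : Type} (nm : nat -> T) (m : nat) (x : T) : nat -> T :=
  fun i => if i == m then x else nm i.

Lemma set_cnom_id {T : Type} (nm : nat -> T) m x : set_cnom nm m x m = x.
Proof. by rewrite /set_cnom eqxx. Qed.

Section FreshConominal.
Context {dC : Order.disp_t} {C : tbLatticeType dC} (boxC diaC bdiaC : C -> C).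

Lemma pstr_val_set_cnom nj nm m x T :
  ~~ cnom_in_pstr m T ->
  pstr_val boxC diaC bdiaC nj (set_cnom nm m x) T = pstr_val boxC diaC bdiaC nj nm T.
Proof.
elim: T => [i|i|T IH|T IH|T IH] //= mT; try by rewrite IH.
by rewrite /set_cnom (negbTE mT).
Qed.

Lemma ineq_holds_set_cnom V nj nm m x g :
  ~~ cnom_in_ineq m g ->
  ineq_holds boxC diaC bdiaC V nj (set_cnom nm m x) g <->
  ineq_holds boxC diaC bdiaC V nj nm g.
Proof.
have set_cnom_neq i : i != m -> set_cnom nm m x i = nm i.
  by rewrite /set_cnom => /negbTE->.
case: g => [i A|A i|i T|T i] //=; rewrite ?negb_or => mg.
- by rewrite set_cnom_neq.
- by rewrite pstr_val_set_cnom.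
- by case/andP: mg => mT mi; rewrite pstr_val_set_cnom // set_cnom_neq.
Qed.

Lemma seq_valid_fresh_cnom J M Gamma Delta A j m :
  ~~ cnom_in_sequent m (Sequent Gamma Delta) ->
  seq_valid boxC diaC bdiaC J M
    (Sequent (Gamma ++ [:: FLeCnom A m]) (NomLeP j (PBox (PCnom m)) :: Delta))
  <->
  forall V nj nm, (forall i, J (nj i)) -> (forall i, M (nm i)) ->
    (forall g, In_seq g Gamma -> ineq_holds boxC diaC bdiaC V nj nm g) ->
    (forall x, M x -> fml_val boxC diaC V A <= x -> nj j <= boxC x) \/
    exists2 dl, In_seq dl Delta & ineq_holds boxC diaC bdiaC V nj nm dl.
Proof.
rewrite /cnom_in_sequent /= negb_or => /andP[mGamma mDelta].
split=> [valid V nj nm Jnj Mnm HGamma | valid V nj nm Jnj Mnm HGammaA].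
  have [someDelta|noDelta] :=
    classic (exists2 dl, In_seq dl Delta & ineq_holds boxC diaC bdiaC V nj nm dl).
    by right.
  left=> x Mx Ax; pose nm' := set_cnom nm m x.
  have Mnm' i : M (nm' i) by rewrite /nm' /set_cnom; case: (i == m).
  have HGammaA g : In_seq g (Gamma ++ [:: FLeCnom A m]) ->
      ineq_holds boxC diaC bdiaC V nj nm' g.
    case/In_seq_cat=> [gGamma|[<-|[]]]; last by rewrite /= /nm' set_cnom_id.
    by apply/ineq_holds_set_cnom; [exact: In_seq_hasN gGamma | exact: HGamma].
  case/exists_In_seq_cons: (valid V nj nm' Jnj Mnm' HGammaA) => [|[dl dlDelta]].
    by rewrite /= /nm' set_cnom_id.
  move/ineq_holds_set_cnom => /(_ (In_seq_hasN mDelta dlDelta)) dlholds.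
  by case: noDelta; exists dl.
have [HGamma Am] : (forall g, In_seq g Gamma -> ineq_holds boxC diaC bdiaC V nj nm g)
    /\ fml_val boxC diaC V A <= nm m.
  split=> [g gGamma|]; first by apply: HGammaA; apply/In_seq_cat; left.
  by apply: (HGammaA (FLeCnom A m)); apply/In_seq_cat; right; left.
apply/exists_In_seq_cons.
by case: (valid V nj nm Jnj Mnm HGamma) => [/(_ _ (Mnm m) Am)|]; [left|right].
Qed.

End FreshConominal.

Theorem mainTheorem4
  (d : Order.disp_t) (L : tbLatticeType d) (box dia : L -> L)
  (HA : is_Lalgebra box dia)
  (dC : Order.disp_t) (C : tbLatticeType dC) (e : L -> C)
  (Hce : canonical_extension e)
  (boxpi diasig bdia : C -> C)
  (Hbox : pi_extension e box boxpi)
  (Hdia : sigma_extension e dia diasig)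
  (Hbdia : forall u v : C, bdia u <= v <-> u <= boxpi v)
  (J M : C -> Prop)
  (HJ : completely_join_generating J) (HM : completely_meet_generating M)
  (Gamma Delta : seq ineq) (A : fml) (j m : nat)
  (Hm : ~~ cnom_in_sequent m (Sequent Gamma (NomLeF j (FBox A) :: Delta))) :
  seq_valid boxpi diasig bdia J M
    (Sequent (Gamma ++ [:: FLeCnom A m]) (NomLeP j (PBox (PCnom m)) :: Delta))
  <->
  seq_valid boxpi diasig bdia J M
    (Sequent Gamma (NomLeF j (FBox A) :: Delta)).
Proof.
rewrite seq_valid_fresh_cnom; last exact: Hm.
have box_meet_gen := le_right_adjoint_meet_generated Hbdia HM.
by split=> valid V nj nm Jnj Mnm HGamma; have := valid V nj nm Jnj Mnm HGamma;
  rewrite exists_In_seq_cons /= box_meet_gen.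
Qed.
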